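(* Let $X\in\mathcal{C}^\circ(\mathbb{R}^2)$ admit a GCGR with sufficient scaling factor $\eta(X)$, let $x_G\in\mathrm{int}X$ and $r>0$. Then for each integer $m\ge\eta(X)$, the family $\mathcal{P}_{\mathrm{grid}}(X,x_G,m)=\{P_{\mathrm{grid}}(X,x_I,x_G,m): x_I\in\mathrm{int}X\}$ contains only finitely many pairwise non-isomorphic planning problems.
   Context: $\mathcal{C}^\circ(\mathbb{R}^2)$ is the collection of compact, connected subsets of $\mathbb{R}^2$ with non-empty interior. For $x\in X$, $m\in\mathbb{N}$: $X_{\mathrm{grid}}(x,m):=\mathrm{int}X\cap(x+2^{-m}(\mathbb{Z}\times\mathbb{Z}))$; such a set is connected if any two of its points are joined by a chain of its points with consecutive points at distance $2^{-m}$. $X$ admits a GCGR with sufficient scaling factor $\eta(X)\in\mathbb{N}$ if for all $m\ge\eta(X)$ and all $x_I\in X$, $X_{\mathrm{grid}}(x_I,m)$ is connected. With $v\in\{(-1,0),(1,0),(0,1),(0,-1)\}$, let $U_m=\{2^{-m}v\}$. For $x_I\in\mathrm{int}X$ let $x_G(x_I,m):=B_r(x_G)\cap(x_I+2^{-m}(\mathbb{Z}\times\mathbb{Z}))$ and $P_{\mathrm{grid}}(X,x_I,x_G,m):=(X_{\mathrm{grid}}(x_I,m),U_m,f_m,x_I,x_G(x_I,m))$, where $f_m(x,u)=x+u$ if $x+u\in X_{\mathrm{grid}}(x_I,m)$ and $f_m(x,u)=x$ otherwise. Planning problems $(X,U,f,x_I,X_G)$ and $(X',U',f',x_I',X_G')$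 are isomorphic if there are bijections $\varphi:X\to X'$, $\xi:U\to U'$ with $\varphi(x_I)=x_I'$, $\varphi(X_G)=X_G'$ and $f'(\varphi(x),\xi(u))=\varphi(f(x,u))$ for all $x\in X$, $u\in U$. *)

From HB Require Import structures.
From mathcomp Require Import all_boot all_order all_algebra.
From mathcomp Require Import all_classical all_reals topology normedtype.
Set Implicit Arguments. Unset Strict Implicit. Unset Printing Implicit Defensive.
Import Order.TTheory GRing.Theory Num.Theory.
Import numFieldNormedType.Exports.
Local Open Scope classical_set_scope.
Local Open Scope ring_scope.

Section Defs.
Variable R : realType.
Notation pt := (R * R)%type.

Definition edist (p q : pt) : R :=
  Num.sqrt ((p.1 - q.1) ^+ 2 + (p.2 - q.2) ^+ 2).

Definition eball (c : pt) (r : R) : set pt := [set p | edist p c < r].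

Definition gstep (m : nat) : R := (2%:R ^+ m)^-1.

Definition lattice (x : pt) (m : nat) : set pt :=
  [set p | exists i j : int,
      p = (x.1 + i%:~R * gstep m, x.2 + j%:~R * gstep m)].

Definition Ccirc (X : set pt) : Prop :=
  [/\ compact X, connected X & (interior X !=set0)].

Definition Xgrid (X : set pt) (x : pt) (m : nat) : set pt :=
  interior X `&` lattice x m.

Definition grid_connected (G : set pt) (h : R) : Prop :=
  forall a b, G a -> G b ->
    exists (n : nat) (p : nat -> pt),
      [/\ p 0%N = a, p n = b,
          (forall k, (k <= n)%N -> G (p k)) &
          (forall k, (k < n)%N -> edist (p k) (p k.+1) = h)].

Definition GCGR (X : set pt) (eta : nat) : Prop :=
  forall (m : nat) (xI : pt), (eta <= m)%N -> X xI ->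
    grid_connected (Xgrid X xI m) (gstep m).

Record planning_problem := PP {
  pp_X : set pt; pp_U : set pt; pp_f : pt -> pt -> pt;
  pp_xI : pt; pp_XG : set pt }.

Definition pp_iso (P Q : planning_problem) : Prop :=
  exists (phi xi : pt -> pt),
    [/\ set_bij (pp_X P) (pp_X Q) phi,
        set_bij (pp_U P) (pp_U Q) xi,
        phi (pp_xI P) = pp_xI Q,
        phi @` (pp_XG P) = pp_XG Q &
        forall x u, pp_X P x -> pp_U P u ->
          pp_f Q (phi x) (xi u) = phi (pp_f P x u)].

Definition Um (m : nat) : set pt :=
  [set u | u = (- gstep m, 0) \/ u = (gstep m, 0) \/
           u = (0, gstep m) \/ u = (0, - gstep m)].

Definition fm (X : set pt) (xI : pt) (m : nat) (x u : pt) : pt :=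
  if `[< Xgrid X xI m (x + u) >] then x + u else x.

Definition goal_set (xG : pt) (r : R) (xI : pt) (m : nat) : set pt :=
  eball xG r `&` lattice xI m.

Definition Pgrid (X : set pt) (xI xG : pt) (r : R) (m : nat) : planning_problem :=
  PP (Xgrid X xI m) (Um m) (fm X xI m) xI (goal_set xG r xI m).

End Defs.

From HB Require Import structures.
From mathcomp Require Import all_boot all_order all_algebra.
From mathcomp Require Import all_classical all_reals topology normedtype.
From mathcomp Require Import ring lra zify.

Set Implicit Arguments.
Unset Strict Implicit.
Unset Printing Implicit Defensive.
Import Order.TTheory GRing.Theory Num.Theory.
Import numFieldNormedType.Exports.
Local Open Scope classical_set_scope.
Local Open Scope ring_scope.

(* Translating by [y - x] maps the lattice through [x] onto the lattice
   through [y], commutes with the four moves, and hence is an isomorphism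
   of the grid problems as soon as [int X] and the goal ball look the same
   from [x] and from [y] at every lattice offset [(i, j)].  Since [X] is
   bounded, only offsets in a fixed finite window [|i|, |j| <= N] can meet
   [int X] or the ball, so the isomorphism class of the problem at [x] is
   determined by finitely many bits, and there are finitely many classes. *)

Lemma finite_representatives (A : eqType) (T : finType) (P : set A)
    (f : A -> T) :
  exists s : seq A, (forall y, y \in s -> P y) /\
    (forall x, P x -> exists2 y, y \in s & f y = f x).
Proof.
suff /(_ (enum T)) [s [sP sf]] : forall l : seq T, exists s : seq A,
    (forall y, y \in s -> P y) /\
    (forall x, P x -> f x \in l -> exists2 y, y \in s & f y = f x).
  by exists s; split=> // x Px; apply: (sf x Px); rewrite mem_enum.
elim=> [|t l [s [sP sf]]]; first by exists [::].
have [[x0 [Px0 fx0]] | nonet] := pselect (exists x, P x /\ f x = t).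
- exists (x0 :: s); split=> [y|x Px].
    by rewrite inE => /predU1P [->|/sP].
  rewrite inE => /predU1P [->|/(sf x Px) [y ys fy]].
    by exists x0; rewrite // mem_head.
  by exists y; rewrite // inE ys orbT.
- exists s; split=> // x Px; rewrite inE => /predU1P [fxt|]; last exact: sf.
  by case: nonet; exists x.
Qed.

Section GridTranslation.
Variable R : realType.
Implicit Types (x y p q u c : R * R).

Definition grid_pt x (m : nat) (i j : int) : R * R :=
  (x.1 + i%:~R * gstep R m, x.2 + j%:~R * gstep R m).

Lemma lattice_grid_pt x m i j : lattice x m (grid_pt x m i j).
Proof. by exists i, j. Qed.

Lemma grid_pt_translate x y m i j :
  grid_pt x m i j + (y - x) = grid_pt y m i j.
Proof. by rewrite /grid_pt; congr pair => /=; ring. Qed.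

Lemma lattice_addUm x m p u : lattice x m p -> Um m u -> lattice x m (p + u).
Proof.
move=> [i [j ->]] [->|[->|[->|->]]].
- by exists (i - 1), j; congr pair => /=; ring.
- by exists (i + 1), j; congr pair => /=; ring.
- by exists i, (j + 1); congr pair => /=; ring.
- by exists i, (j - 1); congr pair => /=; ring.
Qed.

Section SamePattern.
Context {S T : set (R * R)} {x y : R * R} {m : nat}.
Hypothesis ST : forall i j, S (grid_pt x m i j) <-> T (grid_pt y m i j).

Lemma grid_translate_mem {q} :
  lattice x m q -> (S `&` lattice x m) q <-> (T `&` lattice y m) (q + (y - x)).
Proof.
move=> [i [j ->]]; rewrite grid_pt_translate.
by split=> -[/ST hq _]; split=> //; apply: lattice_grid_pt.
Qed.

Lemma image_grid_translate :
  (fun p => p + (y - x)) @` (S `&` lattice x m) = T `&` lattice y m.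
Proof.
apply/seteqP; split=> [_ [q /[dup] Sq [_ lq] <-]|q [Tq [i [j qE]]]].
  by apply/(grid_translate_mem lq).
subst q; exists (grid_pt x m i j); last by rewrite grid_pt_translate.
apply/(grid_translate_mem (lattice_grid_pt _ _ _ _)).
by rewrite grid_pt_translate; split=> //; apply: lattice_grid_pt.
Qed.

Lemma set_bij_grid_translate :
  set_bij (S `&` lattice x m) (T `&` lattice y m) (fun p => p + (y - x)).
Proof. by rewrite -image_grid_translate; apply: inj_bij => p q _ _ /addIr. Qed.

End SamePattern.

Definition same_pattern (X : set (R * R)) xG r m x y :=
  forall i j, (X° (grid_pt x m i j) <-> X° (grid_pt y m i j)) /\
              (eball xG r (grid_pt x m i j) <-> eball xG r (grid_pt y m i j)).

Lemma Pgrid_translate_iso (X : set (R * R)) xG r m x y :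
  same_pattern X xG r m x y -> pp_iso (Pgrid X x xG r m) (Pgrid X y xG r m).
Proof.
move=> pat; have intXP i j := (pat i j).1; have ballP i j := (pat i j).2.
exists (fun p => p + (y - x)), id; split=> /=.
- exact: set_bij_grid_translate intXP.
- by split=> [u|u v _ _|u Uu] //; exists u.
- by rewrite addrCA subrr addr0.
- exact: image_grid_translate ballP.
- move=> p u Xp Uu; rewrite /fm addrAC.
  have lpu := lattice_addUm (proj2 Xp) Uu.
  have -> : `[< Xgrid X y m (p + u + (y - x)) >] = `[< Xgrid X x m (p + u) >].
    exact/asbool_equiv_eq/(iff_sym (grid_translate_mem intXP lpu)).
  by case: ifP.
Qed.

Lemma int_step_bound (C : R) m :
  exists N : nat, forall i : int, `|i%:~R * gstep R m| <= C -> `|i| <= N%:Z.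
Proof.
have C0 : 0 <= `|C| * 2%:R ^+ m by rewrite mulr_ge0 ?exprn_ge0.
exists (Num.Def.archi_bound (`|C| * 2%:R ^+ m)) => i iC.
have two_m0 : (2%:R ^+ m : R) != 0 by rewrite expf_neq0 // pnatr_eq0.
have i_scaled : i%:~R = i%:~R * gstep R m * 2%:R ^+ m by rewrite /gstep mulfVK.
apply/ltW; rewrite -(ltr_int R) intr_norm i_scaled; apply: le_lt_trans (archi_boundP C0).
rewrite normrM [`|2%:R ^+ m|]ger0_norm ?exprn_ge0 // ler_wpM2r ?exprn_ge0 //.
exact: le_trans iC (ler_norm C).
Qed.

Lemma eball_coord_bound c r p :
  eball c r p -> `|p.1| <= `|c.1| + r /\ `|p.2| <= `|c.2| + r.
Proof.
have normD_sub (a b : R) : `|a| <= `|a - b| + `|b|.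
  by rewrite -{1}(subrK b a) ler_normD.
rewrite /eball /= /edist => pr.
have coord_le (a s : R) : a ^+ 2 <= s -> Num.sqrt s < r -> `|a| <= r.
  by move=> ab ar; apply/ltW/(le_lt_trans _ ar); rewrite -sqrtr_sqr ler_wsqrtr.
split; [apply: le_trans (normD_sub _ c.1) _ | apply: le_trans (normD_sub _ c.2) _];
  rewrite [_ + r]addrC lerD2r; apply: coord_le pr.
- by rewrite lerDl sqr_ge0.
- by rewrite lerDr sqr_ge0.
Qed.

Lemma compact_coord_bound (X : set (R * R)) :
  compact X -> exists2 M : R, 0 <= M & forall p, X p -> `|p.1| <= M /\ `|p.2| <= M.
Proof.
move=> /compact_bounded /pinfty_ex_gt0 [M M0 XM]; exists M; first exact: ltW.
by move=> p /XM /=; rewrite prod_normE ge_max => /andP.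
Qed.

Lemma pattern_index_bound (X : set (R * R)) c r m : compact X ->
  exists N : nat, forall x i j, X x ->
    X° (grid_pt x m i j) \/ eball c r (grid_pt x m i j) ->
    `|i| <= N%:Z /\ `|j| <= N%:Z.
Proof.
move=> /compact_coord_bound [MX MX0 XMX].
pose M := MX + (`|c.1| + `|c.2| + `|r|).
have bounded p : X p \/ eball c r p -> `|p.1| <= M /\ `|p.2| <= M.
  have := (normr_ge0 c.1, normr_ge0 c.2, normr_ge0 r, ler_norm r).
  move=> [[[? ?] ?] ?] [/XMX|/eball_coord_bound] [? ?]; rewrite /M; split; lra.
have [N NP] := int_step_bound (M + M) m.
exists N => x i j Xx q_rel.
have [x1 x2] := bounded x (or_introl Xx).
have [q1 q2] : `|(grid_pt x m i j).1| <= M /\ `|(grid_pt x m i j).2| <= M.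
  by apply: bounded; case: q_rel => [/interior_subset|]; [left|right].
have shift_le (a d : R) : `|a + d| <= M -> `|a| <= M -> `|d| <= M + M.
  move=> adM aM; rewrite -(addKr a d).
  by apply: le_trans (ler_normD _ _) _; rewrite normrN; lra.
by split; apply: NP; [apply: shift_le q1 x1 | apply: shift_le q2 x2].
Qed.

Definition window_offset N (k : 'I_(2 * N).+1) : int := k%:Z - N%:Z.

Lemma window_offset_onto N (i : int) :
  `|i| <= N%:Z -> exists k : 'I_(2 * N).+1, window_offset k = i.
Proof.
move=> iN; have kN : (absz (i + N%:Z)%R < (2 * N).+1)%N by lia.
by exists (Ordinal kN); rewrite /window_offset /=; lia.
Qed.

Definition pattern (X : set (R * R)) xG r m N x :
    {ffun 'I_(2 * N).+1 * 'I_(2 * N).+1 -> bool * bool} :=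
  [ffun k => let q := grid_pt x m (window_offset k.1) (window_offset k.2) in
             (`[< X° q >], `[< eball xG r q >])].

Lemma pattern_same_pattern (X : set (R * R)) xG r m N x y :
  (forall z i j, X z -> X° (grid_pt z m i j) \/ eball xG r (grid_pt z m i j) ->
     `|i| <= N%:Z /\ `|j| <= N%:Z) ->
  X x -> X y -> pattern X xG r m N x = pattern X xG r m N y ->
  same_pattern X xG r m x y.
Proof.
move=> window Xx Xy pat_xy i j.
have [/andP [iN jN]|out] := boolP ((`|i| <= N%:Z) && (`|j| <= N%:Z)).
  have [[ki <-] [kj <-]] := (window_offset_onto iN, window_offset_onto jN).
  have := congr1 (fun f : {ffun _ -> bool * bool} => f (ki, kj)) pat_xy.
  by rewrite !ffunE /= => -[E1 E2]; split; apply: asbool_eq_equiv.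
have irrelevant z : X z ->
    ~ (X° (grid_pt z m i j) \/ eball xG r (grid_pt z m i j)).
  by move=> Xz /(window z i j Xz) [iN jN]; rewrite iN jN in out.
by have := irrelevant x Xx; have := irrelevant y Xy; split; split; tauto.
Qed.

End GridTranslation.

Theorem proposition2 (R : realType) (X : set (R * R)) (eta : nat)
  (xG : R * R) (r : R) :
  Ccirc X -> GCGR X eta -> interior X xG -> 0 < r ->
  forall m : nat, (eta <= m)%N ->
    exists s : seq (R * R),
      (forall y, y \in s -> interior X y) /\
      (forall xI, interior X xI ->
         exists2 y, y \in s & pp_iso (Pgrid X xI xG r m) (Pgrid X y xG r m)).
Proof.
move=> [cX _ _] _ _ _ m _.
have [N window] := pattern_index_bound xG r m cX.
have [s [s_int s_rep]] := finite_representatives X° (pattern X xG r m N).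
exists s; split=> // xI xI_int.
have [y ys pat_yx] := s_rep xI xI_int.
have y_int := s_int y ys.
exists y => //; apply: Pgrid_translate_iso.
by apply: (pattern_same_pattern window _ _ (esym pat_yx)); exact: interior_subset.
Qed.
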